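(* Let $\mathcal{A}$ be a finite set of non-commuting variables with at least two elements, let $a\in\mathcal{A}$, and let $P\in\mathbb{Q}\langle\mathcal{A}\rangle$ be such that for every $k\ge 0$ the coefficient of the word $a^k$ in $P$ is zero. If $\mathrm{ad}_a(P)=[a,P]=aP-Pa$ is a Lie polynomial, i.e. $[a,P]\in\mathcal{L}_\mathbb{Q}(\mathcal{A})$, then $P$ is a Lie polynomial, i.e. $P\in\mathcal{L}_\mathbb{Q}(\mathcal{A})$.
   Context: $\mathbb{Q}\langle\mathcal{A}\rangle$ is the ring of polynomials with rational coefficients in the non-commuting variables $\mathcal{A}$ (finite linear combinations of words in $\mathcal{A}$, including the empty word), with commutator $[X,Y]=XY-YX$. $\mathcal{L}_\mathbb{Q}(\mathcal{A})$ is the smallest $\mathbb{Q}$-subspace of $\mathbb{Q}\langle\mathcal{A}\rangle$ containing $\mathcal{A}$ and closed under commutators; its elements are called Lie polynomials. *)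

(* Non-commutative polynomials Q<A> over a finite alphabet A
   are represented by their coefficient functions  seq A -> rat  (words are
   sequences of letters, the empty word is [::]); membership in Q<A> is the
   finite-support condition [ncfin]. *)
From mathcomp Require Import all_boot all_order all_algebra.
Set Implicit Arguments. Unset Strict Implicit. Unset Printing Implicit Defensive.
Import GRing.Theory.
Local Open Scope ring_scope.

Section NC.
Variable A : finType.

Definition ncpoly := seq A -> rat.

Definition ncfin (P : ncpoly) : Prop :=
  exists s : seq (seq A), forall w, w \notin s -> P w = 0.

Definition ncmul (P Q : ncpoly) : ncpoly :=
  fun w => \sum_(i < (size w).+1) P (take i w) * Q (drop i w).

Definition ncadd (P Q : ncpoly) : ncpoly := fun w => P w + Q w.
Definition ncscale (c : rat) (P : ncpoly) : ncpoly := fun w => c * P w.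
Definition nczero : ncpoly := fun _ => 0.

Definition ncletter (x : A) : ncpoly := fun w => if w == [:: x] then 1 else 0.

Definition ncbracket (P Q : ncpoly) : ncpoly :=
  fun w => ncmul P Q w - ncmul Q P w.

Inductive is_lie : ncpoly -> Prop :=
| lie_letter x : is_lie (ncletter x)
| lie_zero : is_lie nczero
| lie_add P Q : is_lie P -> is_lie Q -> is_lie (ncadd P Q)
| lie_scale c P : is_lie P -> is_lie (ncscale c P)
| lie_bracket P Q : is_lie P -> is_lie Q -> is_lie (ncbracket P Q)
| lie_ext P Q : is_lie P -> (forall w, P w = Q w) -> is_lie Q.

End NC.

(* Let Na be the derivation of Q<A> multiplying every word by
   its number of letters different from a, and let Theta send a word to its
   right-normed bracketing [x1, [x2, ... [x(n-1), xn]]] when it does not end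
   with a, and to 0 when it does. If Y has no constant term, then
   Theta (X Y) = ad_alg X (Theta Y), where ad_alg is the algebra morphism
   extending x |-> ad x; ad_alg X = ad X for Lie X, so by induction
   Theta = Na on Lie polynomials. Both maps commute with ad a on polynomials
   without constant term, hence D = Theta P - Na P commutes with a; as D has
   no coefficient on the words a^k, comparing the coefficients of a w and w a
   shows D = 0. Thus Na P = Theta P, and P = sum_w P_w / Na(w) Theta(w) is a
   Lie polynomial. *)

From HB Require Import structures.
From mathcomp Require Import all_boot all_order all_algebra finmap.
From mathcomp.multinomials Require Import monalg.
Set Implicit Arguments. Unset Strict Implicit. Unset Printing Implicit Defensive.
Import GRing.Theory Num.Theory.
Local Open Scope ring_scope.

Section WordSplittings.
Variable T : eqType.
Implicit Types (a b : T) (s u v w : seq T).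

Lemma count_splits u v w :
  (\sum_(i < (size w).+1) ((u == take i w) && (v == drop i w)))%N = (u ++ v == w).
Proof.
have [<- | neq_uvw] := eqVneq (u ++ v) w; last first.
  rewrite big1 // => i _; case: andP => // -[/eqP eq_u /eqP eq_v].
  by rewrite eq_u eq_v cat_take_drop eqxx in neq_uvw.
have lt_u : (size u < (size (u ++ v)).+1)%N by rewrite ltnS size_cat leq_addr.
rewrite (bigD1 (Ordinal lt_u)) //= take_size_cat // drop_size_cat // !eqxx.
rewrite big1 // => i /eqP neq_i; case: andP => // -[/eqP eq_u _]; case: neq_i.
by apply: val_inj; rewrite /= [in RHS]eq_u size_takel // -ltnS ltn_ord.
Qed.

Lemma nseq_or_trailing a w :
  w = nseq (size w) a \/ exists s b j, b != a /\ w = rcons s b ++ nseq j a.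
Proof.
have nseqS j : nseq j.+1 a = rcons (nseq j a) a by rewrite -addn1 nseqD cats1.
elim/last_ind: w => [|w x [eq_w|[s [b [j [b_a ->]]]]]]; first by left.
- have [->|x_a] := eqVneq x a; last by right; exists w, x, 0%N; rewrite cats0.
  by left; rewrite size_rcons nseqS -eq_w.
- have [->|x_a] := eqVneq x a; last first.
    by right; exists (rcons s b ++ nseq j a), x, 0%N; rewrite cats0.
  by right; exists s, b, j.+1; rewrite nseqS rcons_cat.
Qed.
End WordSplittings.

Section MalgExtensionality.
Variables (K : choiceType) (G V : zmodType).
Implicit Types (X Y : {malg G[K]}).

Lemma malg_ext (f g : {malg G[K]} -> V) :
  {morph f : X Y / X + Y} -> {morph g : X Y / X + Y} ->
  (forall c k, f << c *g k >> = g << c *g k >>) -> f =1 g.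
Proof.
move=> fD gD fg X; rewrite (monalgE X).
have f0 : f 0 = 0 by apply: (addrI (f 0)); rewrite -fD !addr0.
have g0 : g 0 = 0 by apply: (addrI (g 0)); rewrite -gD !addr0.
by rewrite (big_morph f fD f0) (big_morph g gD g0); apply: eq_bigr.
Qed.

Lemma malg_ext2 (f g : {malg G[K]} -> {malg G[K]} -> V) :
  (forall Y, {morph f^~ Y : X1 X2 / X1 + X2}) ->
  (forall X, {morph f X : Y1 Y2 / Y1 + Y2}) ->
  (forall Y, {morph g^~ Y : X1 X2 / X1 + X2}) ->
  (forall X, {morph g X : Y1 Y2 / Y1 + Y2}) ->
  (forall c k d l, f << c *g k >> << d *g l >> = g << c *g k >> << d *g l >>) ->
  forall X Y, f X Y = g X Y.
Proof.
move=> fDl fDr gDl gDr fg X Y.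
apply: (@malg_ext (f^~ Y) (g^~ Y)) => // c k.
exact: (@malg_ext (f _) (g _)).
Qed.
End MalgExtensionality.

Lemma malgZU (R : nzRingType) (K : choiceType) (c d : R) (k : K) :
  c *: << d *g k >> = << c * d *g k >> :> {malg R[K]}.
Proof. by apply/malgP => l; rewrite mcoeffZ !mcoeffU mulrnAr. Qed.

Lemma malgUM (R : nzRingType) (K : monomType) (c d : R) (k l : K) :
  << c *g k >> * << d *g l >> = << c * d *g mmul k l >> :> {malg R[K]}.
Proof. by rewrite malgM_def fgmulUU. Qed.

Section MalgAlgebra.
Variables (R : comNzRingType) (K : monomType).
Implicit Types (X Y : {malg R[K]}) (c d : R) (k l : K).

Lemma malgC_comm c X : X * c%:MP = c%:MP * X.
Proof.
apply: (@malg_ext _ _ _ (fun X => X * c%:MP) (fun X => c%:MP * X))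
  => [U V|U V|d k] /=.
- exact: mulrDl.
- exact: mulrDr.
by rewrite !malgUM mulm1 mul1m mulrC.
Qed.

Lemma malg_scalerAr c X Y : c *: (X * Y) = X * (c *: Y).
Proof. by rewrite -!mul_malgC mulrA -malgC_comm mulrA. Qed.
End MalgAlgebra.

Section MalgLinearExtension.
Variables (R : nzRingType) (K : choiceType) (V : lmodType R) (h : K -> V).
Implicit Types (X Y : {malg R[K]}).

(* The whole function is locked: unlocked, a failed unification between two
   terms [mlin h X] during rewriting unfolds the sums and the finitely
   supported maps under them, which can take minutes. *)
Fact mlin_key : unit. Proof. exact: tt. Qed.
Definition mlin : {malg R[K]} -> V :=
  locked_with mlin_key (fun X => \sum_(k <- msupp X) X@_k *: h k).

Lemma mlinE X : mlin X = \sum_(k <- msupp X) X@_k *: h k.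
Proof. by rewrite /mlin locked_withE. Qed.

Lemma mlinEw (d : {fset K}) X :
  (msupp X `<=` d)%fset -> mlin X = \sum_(k <- d) X@_k *: h k.
Proof.
move=> le; rewrite mlinE (big_fset_incl _ le) // => k _ /mcoeff_outdom ->.
by rewrite scale0r.
Qed.

Lemma mlin_is_linear : linear mlin.
Proof.
move=> c X Y; pose d := (msupp X `|` msupp Y)%fset.
have le_X : (msupp X `<=` d)%fset := fsubsetUl _ _.
have le_Y : (msupp Y `<=` d)%fset := fsubsetUr _ _.
have le_cXY : (msupp (c *: X + Y) `<=` d)%fset.
  exact: fsubset_trans (msuppD_le _ _) (fsetSU _ (msuppZ_le _ _)).
rewrite (mlinEw le_cXY) (mlinEw le_X) (mlinEw le_Y) scaler_sumr -big_split.
by apply: eq_bigr => k _; rewrite mcoeffD mcoeffZ scalerDl scalerA.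
Qed.

HB.instance Definition _ :=
  GRing.isLinear.Build R {malg R[K]} V *:%R mlin mlin_is_linear.

Lemma mlinU c k : mlin << c *g k >> = c *: h k.
Proof. by rewrite (mlinEw msuppU_le) big_seq_fset1 mcoeffUU. Qed.
End MalgLinearExtension.

Section Bracket.
Variable T : pzRingType.
Implicit Types x y z : T.

Definition bracket x y := x * y - y * x.

Lemma bracketC x y : bracket x y = - bracket y x.
Proof. by rewrite /bracket opprB. Qed.

Lemma bracket0l x : bracket 0 x = 0.
Proof. by rewrite /bracket mul0r mulr0 subrr. Qed.

Lemma bracketDl x y z : bracket (x + y) z = bracket x z + bracket y z.
Proof. by rewrite /bracket mulrDl mulrDr opprD addrACA. Qed.

Lemma jacobi x y z :
  bracket x (bracket y z) - bracket y (bracket x z) = bracket (bracket x y) z.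
Proof.
rewrite /bracket !(mulrBr, mulrBl) !mulrA !opprB !addrA.
(* the terms y z x and x z y cancel *)
by rewrite (ACl ((1*8*3*6)*((2*5)*(4*7)))%AC) /= !addNr !addr0.
Qed.
End Bracket.

Section BracketLinear.
Variables (R : pzRingType) (T : algType R).
Implicit Types x y : T.

Lemma bracket_is_linear x : linear (bracket x).
Proof.
move=> c y z; rewrite /bracket mulrDr mulrDl -scalerAr -scalerAl.
by rewrite scalerBr opprD addrACA.
Qed.

HB.instance Definition _ x :=
  GRing.isLinear.Build R T T *:%R (bracket x) (bracket_is_linear x).

Lemma bracketZl c x y : bracket (c *: x) y = c *: bracket x y.
Proof. by rewrite !(bracketC _ y) linearZ scalerN. Qed.
End BracketLinear.

Section FreeAlgebra.
Variables (R : comNzRingType) (A : choiceType).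
Local Notation M := {malg R[(fmonom A : monomType)]}.

(* A copy of {malg R[fmonom A]} whose product is locked, like [mlin]. *)
Definition ncalg : Type := M.
HB.instance Definition _ := GRing.Lmodule.on ncalg.

Fact ncalg_mul_key : unit. Proof. exact: tt. Qed.
Definition ncalg_mul : ncalg -> ncalg -> ncalg :=
  locked_with ncalg_mul_key (@GRing.mul M).

Lemma ncalg_mulE : ncalg_mul = @GRing.mul M.
Proof. exact: locked_withE. Qed.

Fact ncalg_mulA : associative ncalg_mul.
Proof. by rewrite ncalg_mulE; exact: mulrA. Qed.
Fact ncalg_mul1r : left_id (1 : M) ncalg_mul.
Proof. by rewrite ncalg_mulE; exact: mul1r. Qed.
Fact ncalg_mulr1 : right_id (1 : M) ncalg_mul.
Proof. by rewrite ncalg_mulE; exact: mulr1. Qed.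
Fact ncalg_mulDl : left_distributive ncalg_mul +%R.
Proof. by rewrite ncalg_mulE; exact: mulrDl. Qed.
Fact ncalg_mulDr : right_distributive ncalg_mul +%R.
Proof. by rewrite ncalg_mulE; exact: mulrDr. Qed.

HB.instance Definition _ := GRing.Zmodule_isNzRing.Build ncalg
  ncalg_mulA ncalg_mul1r ncalg_mulr1 ncalg_mulDl ncalg_mulDr (oner_neq0 M).

Fact ncalg_scalerAl (c : R) (X Y : ncalg) :
  c *: ncalg_mul X Y = ncalg_mul (c *: X) Y.
Proof. by rewrite ncalg_mulE; exact: scalerAl. Qed.
HB.instance Definition _ := GRing.Lmodule_isLalgebra.Build R ncalg ncalg_scalerAl.

Fact ncalg_scalerAr (c : R) (X Y : ncalg) :
  c *: ncalg_mul X Y = ncalg_mul X (c *: Y).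
Proof. by rewrite ncalg_mulE; exact: malg_scalerAr. Qed.
HB.instance Definition _ := GRing.Lalgebra_isAlgebra.Build R ncalg ncalg_scalerAr.

Local Notation F := ncalg.
Implicit Types (X Y Z : F) (c d : R) (u v w : seq A) (x : A).

Lemma ncalg_mulUU c d u v :
  (<< c *g FMonom u >> : F) * << d *g FMonom v >> = << c * d *g FMonom (u ++ v) >>.
Proof.
rewrite -[LHS]/(ncalg_mul _ _) ncalg_mulE malgUM; congr << _ *g _ >>.
by apply: val_inj; rewrite /= fmM.
Qed.

Definition coef X w : R := X@_(FMonom w).

Lemma coef_ext X Y : coef X =1 coef Y -> X = Y.
Proof. by move=> eXY; apply/malgP => -[w]; exact: eXY. Qed.

Lemma coef0 w : coef 0 w = 0.
Proof. exact: mcoeff0. Qed.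

Lemma coefD X Y w : coef (X + Y) w = coef X w + coef Y w.
Proof. exact: mcoeffD. Qed.

Lemma coefB X Y w : coef (X - Y) w = coef X w - coef Y w.
Proof. exact: mcoeffB. Qed.

Lemma coefZ c X w : coef (c *: X) w = c * coef X w.
Proof. exact: mcoeffZ. Qed.

Lemma coefU c u w : coef << c *g FMonom u >> w = c *+ (u == w).
Proof. by rewrite /coef mcoeffU fmP. Qed.

Lemma coef_mlin (h : fmonom A -> F) X w :
  coef (mlin h X) w = \sum_(k <- msupp X) X@_k * coef (h k) w.
Proof. by rewrite /coef mlinE raddf_sum; apply: eq_bigr => k _; exact: mcoeffZ. Qed.

Lemma coefM X Y w :
  coef (X * Y) w = \sum_(i < (size w).+1) coef X (take i w) * coef Y (drop i w).
Proof.
move: X Y; apply: (malg_ext2 (f := fun X Y : F => coef (X * Y) w)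
  (g := fun X Y => \sum_(i < (size w).+1) coef X (take i w) * coef Y (drop i w)))
  => [Y X1 X2|X Y1 Y2|Y X1 X2|X Y1 Y2|c [u] d [v]] /=.
- by rewrite mulrDl coefD.
- by rewrite mulrDr coefD.
- by rewrite -big_split; apply: eq_bigr => i _; rewrite coefD mulrDl.
- by rewrite -big_split; apply: eq_bigr => i _; rewrite coefD mulrDr.
rewrite ncalg_mulUU coefU -count_splits -sumrMnr.
by apply: eq_bigr => i _; rewrite !coefU mulrnAl mulrnAr -mulrnA mulnb andbC.
Qed.

Definition letter x : F := << FMonom [:: x] >>.

Definition ad_word w Y : F := foldr (fun x => bracket (letter x)) Y w.

Lemma ad_word_is_linear w : linear (ad_word w).
Proof. by elim: w => [|x w IHw] c Y Z //=; rewrite IHw linearP. Qed.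

HB.instance Definition _ w :=
  GRing.isLinear.Build R F F *:%R (ad_word w) (ad_word_is_linear w).

Lemma ad_word_cat u v Y : ad_word (u ++ v) Y = ad_word u (ad_word v Y).
Proof. exact: foldr_cat. Qed.

Definition ad_alg X Y : F := mlin (fun k : fmonom A => ad_word k Y) X.

Lemma ad_algU c u Y : ad_alg << c *g FMonom u >> Y = c *: ad_word u Y.
Proof. exact: mlinU. Qed.

Lemma ad_alg_is_linear X : linear (ad_alg X).
Proof.
move=> c Y Z; rewrite /ad_alg !mlinE scaler_sumr -big_split.
by apply: eq_bigr => k _; rewrite linearP scalerDr !scalerA mulrC.
Qed.

HB.instance Definition _ X :=
  GRing.isLinear.Build R F F *:%R (ad_alg X) (ad_alg_is_linear X).

Lemma ad_algDl X Y Z : ad_alg (X + Y) Z = ad_alg X Z + ad_alg Y Z.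
Proof. exact: linearD. Qed.

Lemma ad_algBl X Y Z : ad_alg (X - Y) Z = ad_alg X Z - ad_alg Y Z.
Proof. exact: linearB. Qed.

Lemma ad_algZl c X Z : ad_alg (c *: X) Z = c *: ad_alg X Z.
Proof. exact: linearZ. Qed.

Lemma ad_algM X Y Z : ad_alg (X * Y) Z = ad_alg X (ad_alg Y Z).
Proof.
move: X Y; apply: (malg_ext2 (f := fun X Y : F => ad_alg (X * Y) Z)
  (g := fun X Y => ad_alg X (ad_alg Y Z)))
  => [Y X1 X2|X Y1 Y2|Y X1 X2|X Y1 Y2|c [u] d [v]] /=.
- by rewrite mulrDl ad_algDl.
- by rewrite mulrDr ad_algDl.
- exact: ad_algDl.
- by rewrite ad_algDl linearD.
by rewrite ncalg_mulUU !ad_algU linearZ scalerA ad_word_cat.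
Qed.

Inductive ncalg_lie : F -> Prop :=
| nclie_letter x : ncalg_lie (letter x)
| nclie0 : ncalg_lie 0
| nclieD X Y : ncalg_lie X -> ncalg_lie Y -> ncalg_lie (X + Y)
| nclieZ c X : ncalg_lie X -> ncalg_lie (c *: X)
| nclie_bracket X Y : ncalg_lie X -> ncalg_lie Y -> ncalg_lie (bracket X Y).

Lemma ad_alg_lie X : ncalg_lie X -> ad_alg X =1 bracket X.
Proof.
elim=> {X} [x||X Y _ IHX _ IHY|c X _ IHX|X Y _ IHX _ IHY] Z.
- by rewrite /letter ad_algU scale1r.
- by rewrite /ad_alg linear0 bracket0l.
- by rewrite ad_algDl IHX IHY bracketDl.
- by rewrite ad_algZl IHX bracketZl.
by rewrite {1}/bracket ad_algBl !ad_algM !IHX !IHY jacobi.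
Qed.

Lemma ncalg_lie_coef_nil X : ncalg_lie X -> coef X [::] = 0.
Proof.
have coef_nilM Y Z : coef (Y * Z) [::] = coef Y [::] * coef Z [::].
  by rewrite coefM big_ord1.
elim=> {X} [x||X Y _ IHX _ IHY|c X _ IHX|X Y _ IHX _ IHY].
- by rewrite /letter coefU.
- exact: coef0.
- by rewrite coefD IHX IHY addr0.
- by rewrite coefZ IHX mulr0.
by rewrite coefB !coef_nilM IHX IHY mulr0 subrr.
Qed.

Lemma ncalg_lie_mlin (h : fmonom A -> F) X :
  (forall k, ncalg_lie (h k)) -> ncalg_lie (mlin h X).
Proof.
move=> lie_h; rewrite mlinE.
by apply: big_ind => [||k _]; [exact: nclie0 | exact: nclieD | exact: nclieZ].
Qed.

Fixpoint right_normed w : F :=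
  if w is x :: v then
    if v is [::] then letter x else bracket (letter x) (right_normed v)
  else 0.

Lemma right_normed_cons x y w :
  right_normed [:: x, y & w] = bracket (letter x) (right_normed (y :: w)).
Proof. by []. Qed.

Lemma right_normed_cat u v :
  v != [::] -> right_normed (u ++ v) = ad_word u (right_normed v).
Proof.
case: v => // y v _; elim: u => [|x u IHu]; first by [].
rewrite cat_cons -[ad_word _ _]/(bracket (letter x) (ad_word u _)) -{}IHu.
by case: u.
Qed.

Lemma ncalg_lie_right_normed w : ncalg_lie (right_normed w).
Proof.
elim: w => [|x [|y w] IHw]; [exact: nclie0 | exact: nclie_letter |].
by rewrite right_normed_cons; apply: nclie_bracket => //; exact: nclie_letter.
Qed.
End FreeAlgebra.

Arguments letter {R A} x.
Arguments right_normed {R A} w.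

Section CommutingWithLetter.
Variables (R : comNzRingType) (A : choiceType) (a : A).
Local Notation F := (ncalg R A).
Implicit Types (X D : F) (u w : seq A) (x y : A).

Lemma coef_letterM x X y w : coef (letter x * X) (y :: w) = (y == x)%:R * coef X w.
Proof.
move: X; apply: (malg_ext (f := fun X : F => coef (letter x * X) (y :: w))
  (g := fun X => (y == x)%:R * coef X w)) => [X1 X2|X1 X2|c [u]] /=.
- by rewrite mulrDr coefD.
- by rewrite coefD mulrDr.
rewrite /letter ncalg_mulUU !coefU mul1r cat1s eqseq_cons (eq_sym x).
by case: (y == x); rewrite ?mul1r ?mul0r.
Qed.

Lemma coef_Mletter X x w y :
  coef (X * letter x) (rcons w y) = coef X w * (y == x)%:R.
Proof.
move: X; apply: (malg_ext (f := fun X : F => coef (X * letter x) (rcons w y))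
  (g := fun X => coef X w * (y == x)%:R)) => [X1 X2|X1 X2|c [u]] /=.
- by rewrite mulrDl coefD.
- by rewrite coefD mulrDl.
rewrite /letter ncalg_mulUU !coefU mulr1 cats1 eqseq_rcons (eq_sym x).
by case: (y == x); rewrite ?mulr1 ?mulr0 ?andbT ?andbF.
Qed.

Lemma commute_letter_eq0 D :
  bracket (letter a) D = 0 -> (forall n, coef D (nseq n a) = 0) -> D = 0.
Proof.
move=> aD_Da D_nseq.
(* In a D = D a, the coefficient of a :: rcons u y moves a trailing letter a of
   a word to its front, and kills the words ending with another letter. *)
have rotate u y : coef D (rcons u y) = coef D (a :: u) * (y == a)%:R.
  have /eqP := congr1 (fun X => coef X (a :: rcons u y)) aD_Da.
  rewrite /= coefB coef0 subr_eq0 => /eqP.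
  by rewrite coef_letterM eqxx mul1r -rcons_cons coef_Mletter.
have D_rcons j : forall s b, b != a -> coef D (rcons s b ++ nseq j a) = 0.
  elim: j => [|j IHj] s b b_a.
    by rewrite cats0 rotate (negbTE b_a) mulr0.
  rewrite -addn1 nseqD catA cats1 rotate eqxx mulr1.
  by rewrite -cat_cons -rcons_cons IHj.
apply: coef_ext => w; rewrite coef0.
case: (nseq_or_trailing a w) => [->|[s [b [j [b_a ->]]]]].
  exact: D_nseq.
exact: D_rcons.
Qed.
End CommutingWithLetter.

Section DynkinOperator.
Variables (R : comNzRingType) (A : choiceType) (a : A).
Local Notation F := (ncalg R A).
Implicit Types (X Y : F) (c : R) (u v w : seq A) (x : A).

Definition na w := count (predC1 a) w.

Definition theta_word w : F := if last a w == a then 0 else right_normed w.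

Definition Theta : F -> F := mlin (fun k : fmonom A => theta_word k).
HB.instance Definition _ := GRing.Linear.on Theta.

Definition Na : F -> F := mlin (fun k : fmonom A => (na k)%:R *: (<< k >> : F)).
HB.instance Definition _ := GRing.Linear.on Na.

Lemma na_eq0 w : na w = 0%N -> w = nseq (size w) a.
Proof.
elim: w => [|x w IHw] //=; rewrite /na /=.
by case: eqVneq => [-> /IHw <-|].
Qed.

Lemma na_nseq n : na (nseq n a) = 0%N.
Proof. by rewrite /na count_nseq /= eqxx. Qed.

Lemma theta_word_na0 w : na w = 0%N -> theta_word w = 0.
Proof.
move/na_eq0 => eq_w; rewrite /theta_word; suff -> : last a w = a by rewrite eqxx.
by rewrite eq_w; elim: (size w) => //= n ->; case: n.
Qed.

Lemma ThetaU c u : Theta << c *g FMonom u >> = c *: theta_word u.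
Proof. exact: mlinU. Qed.

Lemma theta_word_cat u v :
  v != [::] -> theta_word (u ++ v) = ad_word u (theta_word v).
Proof.
move=> nz_v; rewrite /theta_word last_cat; case: v nz_v => // y v _ /=.
by case: ifP => _; [rewrite linear0 | rewrite right_normed_cat].
Qed.

Lemma ncalg_lie_theta_word w : ncalg_lie (theta_word w).
Proof.
by rewrite /theta_word; case: ifP => _; [exact: nclie0 | exact: ncalg_lie_right_normed].
Qed.

Lemma Theta_mul X Y : coef Y [::] = 0 -> Theta (X * Y) = ad_alg X (Theta Y).
Proof.
move=> Y0; move: X; apply: (malg_ext (f := fun X : F => Theta (X * Y))
  (g := fun X => ad_alg X (Theta Y))) => [X1 X2|X1 X2|c [u]] /=.
- by rewrite mulrDl linearD.
- exact: ad_algDl.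
rewrite ad_algU [in LHS](monalgE Y) mulr_sumr linear_sum.
rewrite [Theta Y]/Theta mlinE linear_sum scaler_sumr.
rewrite big_seq [RHS]big_seq; apply: eq_bigr => -[v] v_Y.
have nz_v : v != [::].
  by apply: contraTneq v_Y => ->; rewrite -mcoeff_eq0; apply/eqP.
by rewrite ncalg_mulUU /= ThetaU (theta_word_cat _ nz_v) linearZ scalerA.
Qed.

Lemma NaU c u : Na << c *g FMonom u >> = << c * (na u)%:R *g FMonom u >>.
Proof. by rewrite /Na mlinU !malgZU mulr1 mulrC. Qed.

Lemma coef_Na X w : coef (Na X) w = (na w)%:R * coef X w.
Proof.
move: X; apply: (malg_ext (f := fun X : F => coef (Na X) w)
  (g := fun X => (na w)%:R * coef X w)) => [X1 X2|X1 X2|c [u]] /=.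
- by rewrite linearD coefD.
- by rewrite coefD mulrDr.
rewrite NaU [in LHS]coefU [in RHS]coefU [in RHS]mulrnAr.
by case: eqVneq => [->|_]; rewrite ?mulr0n // mulrC.
Qed.

Lemma NaM X Y : Na (X * Y) = Na X * Y + X * Na Y.
Proof.
apply: coef_ext => w; rewrite coefD coef_Na !coefM mulr_sumr -big_split.
apply: eq_bigr => i _; rewrite !coef_Na -{1}(cat_take_drop i w) /na count_cat natrD.
by rewrite mulrDl mulrA mulrCA.
Qed.

Lemma Na_bracket X Y : Na (bracket X Y) = bracket (Na X) Y + bracket X (Na Y).
Proof. by rewrite /bracket linearB /= !NaM opprD (addrC (- _)) addrACA. Qed.

Lemma Na_letter x : Na (letter x) = (x != a)%:R *: letter x.
Proof. by rewrite /letter NaU malgZU mulrC /na /= addn0. Qed.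

Lemma Na_right_normed w : Na (right_normed w) = (na w)%:R *: right_normed w.
Proof.
elim: w => [|x [_|y w IHw]]; first by rewrite linear0 scaler0.
  by rewrite Na_letter /na /= addn0.
rewrite right_normed_cons Na_bracket Na_letter {}IHw bracketZl linearZ.
by rewrite -scalerDl -natrD.
Qed.

Lemma Na_theta_word w : Na (theta_word w) = (na w)%:R *: theta_word w.
Proof.
rewrite /theta_word; case: ifP => _; last exact: Na_right_normed.
by rewrite linear0 scaler0.
Qed.

Lemma Theta_eq_Na X : ncalg_lie X -> Theta X = Na X.
Proof.
elim=> {X} [x||X Y lie_X IHX lie_Y IHY|c X _ IHX|X Y lie_X IHX lie_Y IHY].
- rewrite /Theta /letter mlinU scale1r Na_letter /theta_word /=.
  by case: eqVneq => _; rewrite ?scale0r ?scale1r.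
- by rewrite !linear0.
- by rewrite !linearD /= {}IHX {}IHY.
- by rewrite !linearZ /= {}IHX.
have [X0 Y0] := (ncalg_lie_coef_nil lie_X, ncalg_lie_coef_nil lie_Y).
rewrite {1}/bracket linearB /= (Theta_mul _ Y0) (Theta_mul _ X0).
rewrite (ad_alg_lie lie_X) (ad_alg_lie lie_Y) {}IHX {}IHY Na_bracket.
by rewrite (bracketC Y) opprK addrC.
Qed.

Lemma Theta_letter : Theta (letter a) = 0.
Proof. by rewrite /Theta /letter mlinU /theta_word /= eqxx scaler0. Qed.

Lemma Theta_bracket_letter X :
  coef X [::] = 0 -> Theta (bracket (letter a) X) = bracket (letter a) (Theta X).
Proof.
move=> X0; have a0 := ncalg_lie_coef_nil (nclie_letter R a).
rewrite {1}/bracket linearB /= (Theta_mul _ X0) (Theta_mul _ a0) Theta_letter.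
by rewrite (ad_alg_lie (nclie_letter R a)) linear0 subr0.
Qed.

Lemma Na_bracket_letter X : Na (bracket (letter a) X) = bracket (letter a) (Na X).
Proof. by rewrite Na_bracket Na_letter eqxx scale0r bracket0l add0r. Qed.
End DynkinOperator.

Arguments theta_word_na0 {R A a w}.
Arguments Na_theta_word {R A} a w.

Section LieCriterion.
Variables (R : numFieldType) (A : choiceType) (a : A).
Local Notation F := (ncalg R A).
Local Notation na := (na a).
Local Notation theta_word := (@theta_word R A a).
Local Notation Theta := (@Theta R A a).
Local Notation Na := (@Na R A a).
Implicit Types (X Y : F) (w : seq A).

Lemma coef_theta_word_nseq w n : coef (theta_word w) (nseq n a) = 0.
Proof.
have := congr1 (fun X => coef X (nseq n a)) (Na_theta_word a w).
rewrite /= coef_Na coefZ na_nseq mul0r => /esym/eqP.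
rewrite mulf_eq0 pnatr_eq0 => /orP[/eqP/theta_word_na0 -> | /eqP //].
exact: coef0.
Qed.

Lemma coef_Theta_nseq X n : coef (Theta X) (nseq n a) = 0.
Proof. by rewrite coef_mlin big1 // => k _; rewrite coef_theta_word_nseq mulr0. Qed.

(* When na k = 0 the inverse is the junk value 0, but then theta_word k = 0. *)
Definition dynkin : F -> F :=
  mlin (fun k : fmonom A => (na k)%:R^-1 *: theta_word k).

Lemma ncalg_lie_dynkin X : ncalg_lie (dynkin X).
Proof. by apply: ncalg_lie_mlin => k; apply/nclieZ/ncalg_lie_theta_word. Qed.

Lemma coef_dynkin_nseq X n : coef (dynkin X) (nseq n a) = 0.
Proof.
rewrite coef_mlin big1 // => k _.
by rewrite coefZ coef_theta_word_nseq !mulr0.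
Qed.

Lemma Na_dynkin X : Na (dynkin X) = Theta X.
Proof.
rewrite /dynkin /Theta !mlinE linear_sum; apply: eq_bigr => k _.
rewrite !linearZ /= Na_theta_word !scalerA.
have [/theta_word_na0 -> | nz_k] := eqVneq (na k) 0%N; first by rewrite !scaler0.
by rewrite mulfVK ?pnatr_eq0.
Qed.

Lemma Na_inj X Y :
  (forall n, coef X (nseq n a) = coef Y (nseq n a)) -> Na X = Na Y -> X = Y.
Proof.
move=> eq_nseq eq_Na; apply: coef_ext => w.
have := congr1 (fun X => coef X w) eq_Na; rewrite /= !coef_Na.
have [/na_eq0 -> _ | nz_w] := eqVneq (na w) 0%N; first exact: eq_nseq.
by apply: mulfI; rewrite pnatr_eq0.
Qed.

Lemma ncalg_lie_of_bracket_letter X :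
  ncalg_lie (bracket (letter a) X) -> (forall n, coef X (nseq n a) = 0) ->
  ncalg_lie X.
Proof.
move=> lie_aX X_nseq; have X0 : coef X [::] = 0 := X_nseq 0%N.
(* The [LHS]/[RHS] patterns keep rewrites from comparing Theta X with Na X,
   which only differ deep inside their unfoldings. *)
have ThetaX : Theta X = Na X.
  apply/eqP; rewrite -subr_eq0; apply/eqP; apply: (commute_letter_eq0 (a := a)).
    rewrite linearB; apply/eqP; rewrite subr_eq0; apply/eqP.
    rewrite -[LHS](Theta_bracket_letter a X0) (Theta_eq_Na a lie_aX).
    exact: Na_bracket_letter.
  move=> n; rewrite coefB; apply/eqP; rewrite subr_eq0; apply/eqP.
  by rewrite [LHS]coef_Theta_nseq [RHS]coef_Na na_nseq mul0r.
suff -> : X = dynkin X by exact: ncalg_lie_dynkin.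
apply: Na_inj => [n|]; first by rewrite X_nseq coef_dynkin_nseq.
by rewrite [RHS]Na_dynkin; exact: esym.
Qed.
End LieCriterion.

Section RationalNoncommutativePolynomials.
Variable A : finType.
Local Notation F := (ncalg rat A).
Implicit Types (X Y : F) (P Q : ncpoly A).

Lemma coef_letter x w : coef (letter x : F) w = ncletter x w.
Proof. by rewrite coefU /ncletter eq_sym; case: eqP. Qed.

Lemma coef_bracket X Y w : coef (bracket X Y) w = ncbracket (coef X) (coef Y) w.
Proof. by rewrite coefB !coefM. Qed.

Lemma eq_ncbracket P P' Q Q' :
  P =1 P' -> Q =1 Q' -> ncbracket P Q =1 ncbracket P' Q'.
Proof.
move=> eqP eqQ w; rewrite /ncbracket /ncmul.
by congr (_ - _); apply: eq_bigr => i _; rewrite eqP eqQ.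
Qed.

Lemma is_lie_coef X : ncalg_lie X -> is_lie (coef X).
Proof.
elim=> {X} [x||X Y _ IHX _ IHY|c X _ IHX|X Y _ IHX _ IHY].
- exact: lie_ext (lie_letter x) (fun w => esym (coef_letter x w)).
- by apply: lie_ext (lie_zero A) _ => w; rewrite coef0.
- by apply: lie_ext (lie_add IHX IHY) _ => w; rewrite coefD.
- by apply: lie_ext (lie_scale c IHX) _ => w; rewrite coefZ.
by apply: lie_ext (lie_bracket IHX IHY) _ => w; rewrite coef_bracket.
Qed.

Lemma ncalg_lie_of_is_lie P : is_lie P -> exists2 X : F, ncalg_lie X & coef X =1 P.
Proof.
elim=> {P} [x||P Q _ [X lie_X eX] _ [Y lie_Y eY]|c P _ [X lie_X eX]
  |P Q _ [X lie_X eX] _ [Y lie_Y eY]|P Q _ [X lie_X eX] ePQ].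
- by exists (letter x); [exact: nclie_letter | exact: coef_letter].
- by exists 0; [exact: nclie0 | exact: coef0].
- by exists (X + Y); [exact: nclieD | move=> w; rewrite coefD eX eY].
- by exists (c *: X); [exact: nclieZ | move=> w; rewrite coefZ eX].
- exists (bracket X Y); first exact: nclie_bracket.
  by move=> w; rewrite coef_bracket (eq_ncbracket eX eY).
- by exists X => // w; rewrite eX.
Qed.

Lemma ncalg_of_ncfin P : ncfin P -> exists X : F, coef X =1 P.
Proof.
case=> s P_s; exists [malg k in [fset FMonom w | w in s]%fset => P k].
move=> w; rewrite /coef mcoeffE; case: ifP => // /negbT w_s.
rewrite P_s //; apply: contra w_s => ws.
by apply/imfsetP; exists w.
Qed.
End RationalNoncommutativePolynomials.

Theorem lemma3 (A : finType) (hA : (1 < #|A|)%N) (a : A) (P : ncpoly A)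
  (hfin : ncfin P)
  (hcoef : forall k : nat, P (nseq k a) = 0)
  (hlie : is_lie (ncbracket (ncletter a) P)) :
  is_lie P.
Proof.
have [X eXP] := ncalg_of_ncfin hfin.
have [Y lie_Y eY] := ncalg_lie_of_is_lie hlie.
have eYX : Y = bracket (letter a) X.
  apply: coef_ext => w; rewrite eY coef_bracket.
  by apply: eq_ncbracket => v; rewrite ?coef_letter ?eXP.
have X_nseq n : coef X (nseq n a) = 0 by rewrite eXP.
rewrite eYX in lie_Y.
exact: lie_ext (is_lie_coef (ncalg_lie_of_bracket_letter lie_Y X_nseq)) eXP.
Qed.
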